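(* In the forking model with more than two alternatives, there exists a forking problem with a monotonic profile that admits no stable assignment.
   Context: A forking problem consists of agents $V=\{v_1,\dots,v_n\}$ and a finite set $M$ of alternatives. Each agent $v_i$ has a strict total order $\succ_i$ on $M\times\{1,\dots,n\}$, where $(S,j)$ means being in the community adopting alternative $S$, of size $j$ (including oneself); it is monotonic if $(S,j)\succ_i(S,k)$ for all $S\in M$ and $1\le k<j\le n$. An assignment is a map $f:V\to M$; $v_i$ prefers $f$ to $g$ if $(f(v_i),|f^{-1}(f(v_i))|)\succ_i(g(v_i),|g^{-1}(g(v_i))|)$. An assignment $f$ is stable if there is no assignment $f'\neq f$ such that every agent $v_i$ with $f'(v_i)\neq f(v_i)$ prefers $f'$ to $f$. *)

From mathcomp Require Import all_boot.
Set Implicit Arguments. Unset Strict Implicit. Unset Printing Implicit Defensive.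

(* Agent i's preference is a relation  pref i  on M * nat, where
   pref i (S,j) (T,k) means (S,j) \succ_i (T,k); only pairs (S,j) with
   1 <= j <= n are meaningful. *)

Definition valid_pair (n : nat) (M : Type) (p : M * nat) : bool :=
  (0 < p.2) && (p.2 <= n).

Definition strict_total_on (M : eqType) (n : nat) (r : rel (M * nat)) : Prop :=
  [/\ (forall p, valid_pair n p -> ~~ r p p),
      (forall p q s, valid_pair n p -> valid_pair n q -> valid_pair n s ->
         r p q -> r q s -> r p s)
    & (forall p q, valid_pair n p -> valid_pair n q -> p != q ->
         r p q || r q p)].

Definition monotonic (M : Type) (n : nat) (pref : 'I_n -> rel (M * nat)) : Prop :=
  forall i (S : M) (j k : nat), 1 <= k -> k < j -> j <= n -> pref i (S, j) (S, k).

Definition comm_size (M : finType) (n : nat) (f : {ffun 'I_n -> M}) (v : 'I_n) : nat :=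
  #|[set w | f w == f v]|.

Definition prefers (M : finType) (n : nat) (pref : 'I_n -> rel (M * nat))
  (v : 'I_n) (f g : {ffun 'I_n -> M}) : bool :=
  pref v (f v, comm_size f v) (g v, comm_size g v).

Definition stable (M : finType) (n : nat) (pref : 'I_n -> rel (M * nat))
  (f : {ffun 'I_n -> M}) : Prop :=
  ~ exists f' : {ffun 'I_n -> M},
      f' != f /\ (forall v, f' v != f v -> prefers pref v f' f).

From mathcomp Require Import all_boot zify.
Set Implicit Arguments. Unset Strict Implicit. Unset Printing Implicit Defensive.

(* Three agents suffice.  Agent i ranks three alternatives a_i, a_(i+1),
   a_(i+2) (indices mod 3) cyclically: a_i in company, then a_(i+1) in
   company, then a_i alone, then a_(i+1) alone, and everything else (a_(i+2)
   and the remaining alternatives) lowest.  In a stable assignment every agent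
   sits at its own or at its next alternative, an agent sitting at its next
   alternative is joined there by the owner of that alternative, and not
   everybody stays at home.  Up to rotation this leaves agents i and i+1
   sharing a_(i+1) with i+2 alone at a_(i+2); but then i and i+2 both gain by
   moving together to a_i. *)

Lemma rank_strict_total (M : eqType) n (rk : M * nat -> nat) :
  {in @valid_pair n M &, injective rk} -> strict_total_on n (fun p q => rk q < rk p).
Proof.
move=> rk_inj; split=> [p _|p q s _ _ _ lt_qp lt_sq|p q vp vq]; first by rewrite ltnn.
  exact: ltn_trans lt_sq lt_qp.
apply: contraR; rewrite negb_or -!leqNgt => /andP [le_pq le_qp].
by apply/eqP/rk_inj => //; apply/eqP; rewrite eqn_leq le_pq le_qp.
Qed.

Section Relocation.
Variables (M : finType) (n : nat).
Implicit Types (f : {ffun 'I_n -> M}) (A : {set 'I_n}) (pref : 'I_n -> rel (M * nat)).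

Lemma comm_size_gt0 f v : 0 < comm_size f v.
Proof. by apply/card_gt0P; exists v; rewrite inE. Qed.

Lemma comm_size_le f v : comm_size f v <= n.
Proof. by rewrite -[X in _ <= X]card_ord max_card. Qed.

Lemma comm_size_alone f v : (forall w, f w = f v -> w = v) -> comm_size f v = 1.
Proof.
move=> alone; rewrite /comm_size -(cards1 v); apply: eq_card => w.
by rewrite !inE; apply/eqP/eqP => [/alone|->].
Qed.

Lemma comm_size_pair f v w : w != v -> f w = f v -> 1 < comm_size f v.
Proof.
move=> wv fwv; have <-: #|[set v; w]| = 2 by rewrite cards2 eq_sym wv.
by apply/subset_leq_card/subsetP => x; rewrite !inE => /orP [] /eqP ->; rewrite ?fwv.
Qed.

Definition relocate f A (a : M) : {ffun 'I_n -> M} :=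
  [ffun w => if w \in A then a else f w].

Lemma relocate_unstable pref f A a w :
  w \in A -> f w != a ->
  {in A, forall v, f v != a -> prefers pref v (relocate f A a) f} ->
  ~ stable pref f.
Proof.
move=> wA fwa better; apply; exists (relocate f A a); split.
  by apply: contraNneq fwa => /ffunP /(_ w); rewrite ffunE wA => ->.
move=> v; rewrite ffunE; case: ifP => [vA|_]; last by rewrite eqxx.
by rewrite eq_sym; apply: better.
Qed.

Lemma move_unstable pref f v a :
  f v != a -> prefers pref v (relocate f [set v] a) f -> ~ stable pref f.
Proof. by move=> fva better; apply: (relocate_unstable (set11 v) fva) => w /set1P ->. Qed.

End Relocation.

Lemma ord3_cases (v w : 'I_3) : [\/ w = v, w = ordS v | w = ord_pred v].
Proof.
suff: [|| w == v, w == ordS v | w == ord_pred v] by case/or3P => /eqP; constructor.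
by move: v w; do 2!case=> [[|[|[|//]]] ?].
Qed.

Lemma ordS_neq (v : 'I_3) : ordS v != v.
Proof. by case: v => [[|[|[|//]]] ?]. Qed.

Lemma ord_pred_neq (v : 'I_3) : ord_pred v != v.
Proof. by case: v => [[|[|[|//]]] ?]. Qed.

Lemma ord_pred_neq_ordS (v : 'I_3) : ord_pred v != ordS v.
Proof. by case: v => [[|[|[|//]]] ?]. Qed.

Inductive role := Own | Next | Prev.

Definition role_of (i r : 'I_3) : role :=
  if r == i then Own else if r == ordS i then Next else Prev.

Lemma role_of_own i : role_of i i = Own.
Proof. by rewrite /role_of eqxx. Qed.

Lemma role_of_next i : role_of i (ordS i) = Next.
Proof. by rewrite /role_of (negbTE (ordS_neq i)) eqxx. Qed.

Lemma role_of_prev i r : r != i -> r != ordS i -> role_of i r = Prev.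
Proof. by rewrite /role_of => /negbTE -> /negbTE ->. Qed.

Lemma role_of_inj i : injective (role_of i).
Proof.
have role_pred : role_of i (ord_pred i) = Prev.
  by rewrite role_of_prev ?ord_pred_neq ?ord_pred_neq_ordS.
move=> r s; case: (ord3_cases i r) => ->; case: (ord3_cases i s) => ->;
  by rewrite ?role_of_own ?role_of_next ?role_pred.
Qed.

(* For community sizes 1..3 the values order the pairs as
   (Own,3) > (Own,2) > (Next,3) > (Next,2) > (Own,1) > (Next,1) > (Prev,_). *)
Definition role_value (t : role) (j : nat) : nat :=
  match t with
  | Own => if j <= 1 then 5 else 6 + j
  | Next => if j <= 1 then 4 else 4 + j
  | Prev => j
  end.

Lemma role_value_inj t s j k : 0 < j <= 3 -> 0 < k <= 3 ->
  role_value t j = role_value s k -> t = s /\ j = k.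
Proof.
move=> /andP [j0 j3] /andP [k0 k3].
by case: t s => [] [] /=; case: (leqP j 1); case: (leqP k 1) => *;
  (split; [done|lia]) || lia.
Qed.

Lemma role_value_mono t j k : 0 < k -> k < j -> j <= 3 -> role_value t k < role_value t j.
Proof. by case: t => /=; case: (leqP j 1); case: (leqP k 1); lia. Qed.

Section ForkingProfile.
Variables (M : finType) (hM : 2 < #|M|).

Definition alt (r : 'I_3) : M := enum_val (widen_ord hM r).

Lemma alt_inj : injective alt.
Proof. by move=> r s /enum_val_inj [] /val_inj. Qed.

Definition core_index (S : M) : option 'I_3 := [pick r | alt r == S].

Variant core_index_spec (S : M) : option 'I_3 -> Type :=
  | CoreAlt r of S = alt r : core_index_spec S (Some r)
  | CoreOut of (forall r, alt r != S) : core_index_spec S None.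

Lemma core_indexP S : core_index_spec S (core_index S).
Proof.
rewrite /core_index; case: pickP => [r /eqP <-|out]; constructor => //.
by move=> r; rewrite out.
Qed.

Definition core_offset : nat := 4 * #|M|.

Definition rank (i : 'I_3) (p : M * nat) : nat :=
  if core_index p.1 is Some r then core_offset + role_value (role_of i r) p.2
  else 4 * enum_rank p.1 + p.2.

Definition forking_pref (i : 'I_3) : rel (M * nat) := fun p q => rank i q < rank i p.

Lemma rank_alt i r j : rank i (alt r, j) = core_offset + role_value (role_of i r) j.
Proof.
by rewrite /rank /=; case: core_indexP => [s /alt_inj ->|/(_ r)]; rewrite ?eqxx.
Qed.

Lemma rank_out_lt i S j : (forall r, alt r != S) -> j <= 3 -> rank i (S, j) < core_offset.
Proof.
rewrite /rank /= => out j3; case: core_indexP => [r eS|_].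
  by have := out r; rewrite eS eqxx.
by have := ltn_ord (enum_rank S); rewrite /core_offset; set N := #|M|; lia.
Qed.

Lemma rank_inj i : {in @valid_pair 3 M &, injective (rank i)}.
Proof.
move=> [S j] [T k]; rewrite !unfold_in /= => jr kr.
have /andP [j0 j3] := jr; have /andP [k0 k3] := kr.
rewrite /rank /=; have := ltn_ord (enum_rank S); have := ltn_ord (enum_rank T).
rewrite /core_offset; set N := #|M|.
case: core_indexP => [r ->|_]; case: core_indexP => [s ->|_] /= ltT ltS.
- by move/addnI/(role_value_inj jr kr) => [/role_of_inj -> ->].
- lia.
- lia.
move=> eq_rank; have eq_jk : j = k by lia.
move: eq_rank; rewrite eq_jk => /addIn /eqP; rewrite eqn_mul2l /=.
by move=> /eqP /val_inj /enum_rank_inj ->.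
Qed.

Lemma forking_pref_strict_total i : strict_total_on 3 (forking_pref i).
Proof. exact/rank_strict_total/rank_inj. Qed.

Lemma forking_pref_monotonic : monotonic forking_pref.
Proof.
move=> i S j k k0 kj j3; rewrite /forking_pref /rank /=.
by case: core_indexP => [r _|_]; [rewrite ltn_add2l; apply: role_value_mono | lia].
Qed.

Lemma rank_lt_own i S j k : S != alt i -> S != alt (ordS i) -> j <= 3 -> 0 < k ->
  rank i (S, j) < rank i (alt i, k).
Proof.
move=> Si Snext j3 k0; rewrite rank_alt role_of_own.
case: (core_indexP S) => [r eS|out]; last by have := rank_out_lt i out j3; lia.
rewrite eS !(inj_eq alt_inj) in Si Snext.
by rewrite eS rank_alt role_of_prev // ltn_add2l /=; case: (leqP k 1); lia.
Qed.

Lemma rank_next_alone_lt_own i k : 0 < k -> rank i (alt (ordS i), 1) < rank i (alt i, k).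
Proof.
by rewrite !rank_alt role_of_own role_of_next ltn_add2l /=; case: (leqP k 1); lia.
Qed.

Lemma rank_next_lt_own i j k : j <= 3 -> 1 < k ->
  rank i (alt (ordS i), j) < rank i (alt i, k).
Proof.
rewrite !rank_alt role_of_own role_of_next ltn_add2l /=.
by case: (leqP j 1); case: (leqP k 1); lia.
Qed.

Lemma rank_own_alone_lt_next i k : 1 < k -> rank i (alt i, 1) < rank i (alt (ordS i), k).
Proof.
by rewrite !rank_alt role_of_own role_of_next ltn_add2l /=; case: (leqP k 1); lia.
Qed.

Section StableAssignment.
Variables (f : {ffun 'I_3 -> M}) (f_stable : stable forking_pref f).

Lemma stable_own_or_next v : f v = alt v \/ f v = alt (ordS v).
Proof.
have [->|fv_own] := eqVneq (f v) (alt v); first by left.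
have [->|fv_next] := eqVneq (f v) (alt (ordS v)); first by right.
case: (move_unstable fv_own _ f_stable).
rewrite /prefers /forking_pref ffunE set11.
by apply: rank_lt_own => //; [apply: comm_size_le | apply: comm_size_gt0].
Qed.

Lemma stable_next_shared v : f v = alt (ordS v) -> f (ordS v) = alt (ordS v).
Proof.
move=> fv; have [w wv fwv] : exists2 w, w != v & f w = f v.
  case: (pickP [pred w | (w != v) && (f w == f v)]) => [w /andP [wv /eqP]|alone].
    by exists w.
  have fv_own : f v != alt v by rewrite fv (inj_eq alt_inj) ordS_neq.
  case: (move_unstable fv_own _ f_stable).
  rewrite /prefers /forking_pref ffunE set11 fv comm_size_alone.
    exact/rank_next_alone_lt_own/comm_size_gt0.
  by move=> w fw; apply/eqP; move: (alone w); rewrite /= fw eqxx andbT => /negbFE.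
rewrite fv in fwv; case: (stable_own_or_next w) => fw; rewrite fw in fwv.
  by rewrite -(alt_inj fwv) fw.
by rewrite (ordS_inj (alt_inj fwv)) eqxx in wv.
Qed.

Lemma stable_not_all_own : exists v, f v != alt v.
Proof.
case: (pickP [pred v | f v != alt v]) => [v fv|all_own]; first by exists v.
have own w : f w = alt w by apply/eqP; move: (all_own w) => /negbFE.
pose v : 'I_3 := ord0.
have fv_next : f v != alt (ordS v) by rewrite own (inj_eq alt_inj) eq_sym ordS_neq.
case: (move_unstable fv_next _ f_stable).
rewrite /prefers /forking_pref ffunE set11 own comm_size_alone; last first.
  by move=> w; rewrite !own => /alt_inj.
apply/rank_own_alone_lt_next/(comm_size_pair (w := ordS v)); first exact: ordS_neq.
by rewrite !ffunE set11 inE (negbTE (ordS_neq v)) own.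
Qed.

End StableAssignment.

Lemma forking_pref_unstable f : ~ stable forking_pref f.
Proof.
move=> f_stable.
have [v fv_own] := stable_not_all_own f_stable.
have fv : f v = alt (ordS v).
  by case: (stable_own_or_next f_stable v) fv_own => ->; rewrite ?eqxx.
have fSv := stable_next_shared f_stable fv.
pose u := ord_pred v; have Su : ordS u = v := ord_predK v.
have uv : u != v := ord_pred_neq v.
have u_next : u != ordS v := ord_pred_neq_ordS v.
have fu : f u = alt u.
  case: (stable_own_or_next f_stable u) => // fu; have := stable_next_shared f_stable fu.
  by rewrite Su fv => /alt_inj/eqP; rewrite (negbTE (ordS_neq v)).
have u_alone : comm_size f u = 1.
  apply: comm_size_alone => w; rewrite fu.
  case: (ord3_cases v w) => -> //; rewrite ?fv ?fSv => /alt_inj/esym/eqP;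
    by rewrite (negbTE u_next).
set g := relocate f [set v; u] (alt v).
have g_shared : g u = g v by rewrite !ffunE !inE !eqxx orbT.
apply: (relocate_unstable (setU11 v [set u]) fv_own _ f_stable) => w.
rewrite /prefers /forking_pref !inE => /orP [] /eqP -> _; rewrite ffunE !inE eqxx ?orbT.
  by rewrite fv; apply: rank_next_lt_own (comm_size_le _ _) (comm_size_pair uv g_shared).
have vu : v != u by rewrite eq_sym.
have := rank_own_alone_lt_next u (comm_size_pair vu (esym g_shared)).
by rewrite fu u_alone Su.
Qed.

End ForkingProfile.

Theorem proposition3 (M : finType) (hM : 2 < #|M|) :
  exists (n : nat) (pref : 'I_n -> rel (M * nat)),
    (forall i, strict_total_on n (pref i)) /\ monotonic pref /\
    (forall f : {ffun 'I_n -> M}, ~ stable pref f).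
Proof.
exists 3, (forking_pref hM); split; first exact: forking_pref_strict_total.
split; first exact: forking_pref_monotonic.
exact: forking_pref_unstable.
Qed.
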